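(* Consider the map $f_{\mathrm{IbM}}(X)=\operatorname{diag}(|X|\mathbf{1}_n)^{-1}XX$ (the system $X(t+1)=f_{\mathrm{IbM}}(X(t))$) on the domain $\mathcal{S}^{+}_{\mathrm{rs\text{-}symm}}$. Define $Q_{\mathrm{IbM}}$ as the set of matrices $PYP^{\top}\in\mathcal{S}^{+}_{\mathrm{rs\text{-}symm}}$ where $P$ is an $n\times n$ permutation matrix and $Y$ is block diagonal with each diagonal block of the form $\operatorname{sign}(w)w^{\top}$, $w\in\mathbb{R}^m$, $|w|\succ\mathbf{0}_m$, $m\le n$ (block sizes summing to $n$). Then: (i) $Q_{\mathrm{IbM}}$ is the set of all fixed points of $f_{\mathrm{IbM}}$ in $\mathcal{S}^{+}_{\mathrm{rs\text{-}symm}}$; (ii) for every $X\in Q_{\mathrm{IbM}}$, $G(X)$ is composed of isolated complete subgraphs that satisfy social balance, i.e., there is a partition of $\{1,\dots,n\}$ into sets $V_1,\dots,V_K$ such that $X_{ij}=0$ whenever $i,j$ lie in different sets, and for each $k$ the principal submatrix of $X$ indexed by $V_k$ has all entries non-zero and its graph satisfies social balance.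
   Context: $|X|$ is entry-wise absolute value, $\mathbf{1}_n$ the all-ones vector, $\operatorname{sign}$ entry-wise sign, $\succ$ entry-wise strict inequality. $\mathcal{S}^{+}_{\mathrm{rs\text{-}symm}}=\{X\in\mathbb{R}^{n\times n}:\operatorname{sign}(X)=\operatorname{sign}(X)^{\top},\ X_{ii}>0\ \forall i,\ \exists\gamma\succ\mathbf{0}_n\text{ with }\operatorname{diag}(\gamma)X=(\operatorname{diag}(\gamma)X)^{\top}\}$. $G(Z)$ is the weighted digraph with adjacency matrix $Z$; it satisfies social balance if $Z_{ii}>0$ for all $i$ and $\operatorname{sign}(Z_{ij})\operatorname{sign}(Z_{jk})\operatorname{sign}(Z_{ki})=1$ for all $i,j,k$. *)

From HB Require Import structures.
From mathcomp Require Import all_boot all_order all_algebra.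
Set Implicit Arguments. Unset Strict Implicit. Unset Printing Implicit Defensive.
Import Order.TTheory GRing.Theory Num.Theory.
Local Open Scope ring_scope.

Definition absmx (R : realFieldType) m p (X : 'M[R]_(m, p)) : 'M[R]_(m, p) :=
  map_mx (fun x => `|x|) X.
Definition sgmx (R : realFieldType) m p (X : 'M[R]_(m, p)) : 'M[R]_(m, p) :=
  map_mx (fun x => Num.sg x) X.

Definition f_IbM (R : realFieldType) n (X : 'M[R]_n) : 'M[R]_n :=
  invmx (diag_mx ((absmx X *m const_mx 1 : 'cV[R]_n)^T)) *m X *m X.

Definition S_rs_symm (R : realFieldType) n (X : 'M[R]_n) : Prop :=
  [/\ sgmx X = (sgmx X)^T,
      (forall i, 0 < X i i) &
      exists gamma : 'cV[R]_n,
        (forall i, 0 < gamma i 0) /\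
        diag_mx gamma^T *m X = (diag_mx gamma^T *m X)^T].

Definition Q_IbM (R : realFieldType) n (X : 'M[R]_n) : Prop :=
  S_rs_symm X /\
  exists (P : 'M[R]_n) (K : nat) (p : 'I_K -> nat)
         (E : (\sum_(k < K) p k)%N = n) (w : forall k : 'I_K, 'cV[R]_(p k)),
    [/\ is_perm_mx P,
        (forall k, 0 < p k)%N,
        (forall k i, 0 < `|w k i 0|) &
        X = P *m castmx (E, E) (\mxdiag_(k < K) (sgmx (w k) *m (w k)^T)) *m P^T].

Definition social_balance (R : realFieldType) m (Z : 'M[R]_m) : Prop :=
  (forall i, 0 < Z i i) /\
  (forall i j k, Num.sg (Z i j) * Num.sg (Z j k) * Num.sg (Z k i) = 1).

Definition principal_submx (R : realFieldType) n (X : 'M[R]_n) (A : {set 'I_n})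
  : 'M[R]_#|A| :=
  \matrix_(i < #|A|, j < #|A|) X (enum_val i) (enum_val j).

From mathcomp Require Import all_boot all_order all_algebra.
From mathcomp Require Import perm ring.
Set Implicit Arguments. Unset Strict Implicit. Unset Printing Implicit Defensive.
Import Order.TTheory GRing.Theory Num.Theory.
Local Open Scope ring_scope.

(* Both descriptions of the fixed points reduce to one combinatorial property,
   sign coherence: row i of X is sg(X_ij) times row j whenever X_ij <> 0.

   A sign-coherent X is a fixed point, because then
   sum_j |X_ij| X_ik = sum_j X_ij X_jk, i.e. diag(|X| 1) X = X X.
   Conversely, if X is a fixed point and S = diag(gamma) X is symmetric, then
   v^T (diag(|S| 1) - S) v = 0 for every column v of X; this signed-Laplacian
   form is a sum of squares, which forces v_a = sg(X_ab) v_b whenever X_ab <> 0.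

   For a sign-coherent X, "X_ij <> 0" is an equivalence relation. Its classes
   are the blocks of Q_IbM: on the class of a representative r,
   X_ij = sg(X_ri) X_rj, which is sign(w) w^T with w the restriction of row r.
   On each class the product of three signs is sg(X_ab)^2 = 1, which is
   social balance. *)

Lemma mulr_sg_sg (R : realDomainType) (x : R) : x != 0 -> Num.sg x * Num.sg x = 1.
Proof. by move=> x_neq0; rewrite -expr2 sqr_sg x_neq0. Qed.

(* The quadratic form of the signed Laplacian diag(|S| 1) - S of a symmetric S is
   sum_(a,b) |S_ab| (v_a - sg(S_ab) v_b)^2 / 2, so it vanishes only on vectors
   that are sign-compatible along the support of S. *)
Lemma signed_laplacian_form_eq0 (R : realFieldType) n (S : 'M[R]_n) (v : 'I_n -> R) :
  S^T = S ->
  \sum_a \sum_b (`|S a b| * v a ^+ 2 - S a b * v a * v b) = 0 ->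
  forall a b, S a b != 0 -> v a = Num.sg (S a b) * v b.
Proof.
move=> /matrixP symS form0.
pose q a b := `|S a b| * v a ^+ 2 - S a b * v a * v b.
have {}form0 : \sum_a \sum_b q a b = 0 by [].
pose t a b := `|S a b| * (v a - Num.sg (S a b) * v b) ^+ 2.
have t_ge0 a b : 0 <= t a b by rewrite mulr_ge0 ?sqr_ge0.
have tE a b : t a b = q a b + q b a.
  have Sba : S b a = S a b by have := symS a b; rewrite mxE.
  have normS_sg : `|S a b| * Num.sg (S a b) = S a b by rewrite mulrC -numEsg.
  have S_sg : S a b * Num.sg (S a b) = `|S a b| by rewrite mulrC -normrEsg.
  rewrite /t /q Sba.
  transitivity (`|S a b| * v a ^+ 2 - `|S a b| * Num.sg (S a b) * v a * v b *+ 2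
                + `|S a b| * Num.sg (S a b) * Num.sg (S a b) * v b ^+ 2); first by ring.
  by rewrite normS_sg S_sg; ring.
have sum_t : \sum_a \sum_b t a b = 0.
  rewrite (eq_bigr _ (fun a _ => eq_bigr _ (fun b _ => tE a b))).
  under eq_bigr do rewrite big_split.
  by rewrite big_split /= [X in _ + X]exchange_big form0 addr0.
move=> a b Sab.
have /eqP : t a b = 0.
  have row0 : \sum_b t a b = 0.
    by apply: (psumr_eq0P _ sum_t) => // a' _; apply: sumr_ge0.
  exact: (psumr_eq0P (fun b' _ => t_ge0 a b') row0).
by rewrite mulf_eq0 normr_eq0 (negbTE Sab) sqrf_eq0 subr_eq0 => /eqP.
Qed.

Definition sign_coherent (R : realFieldType) n (X : 'M[R]_n) : Prop :=
  (forall i, 0 < X i i) /\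
  (forall i j k, X i j != 0 -> X i k = Num.sg (X i j) * X j k).

Section SignCoherent.
Variables (R : realFieldType) (n : nat) (X : 'M[R]_n).
Hypothesis coherentX : sign_coherent X.

Lemma coherent_diag_neq0 i : X i i != 0.
Proof. by case: coherentX => diag_gt0 _; rewrite gt_eqF. Qed.

Lemma coherent_support_row i j k : X i j != 0 -> (X i k != 0) = (X j k != 0).
Proof.
by case: coherentX => _ rowE Xij; rewrite (rowE i j k Xij) mulf_eq0 sgr_eq0 (negbTE Xij).
Qed.

Lemma coherent_support_sym i j : X i j != 0 -> X j i != 0.
Proof. by move=> Xij; rewrite -(coherent_support_row i Xij) coherent_diag_neq0. Qed.

Lemma coherent_sgC i j : Num.sg (X j i) = Num.sg (X i j).
Proof.
have [Xij0|Xij] := eqVneq (X i j) 0.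
  have [Xji0|/coherent_support_sym] := eqVneq (X j i) 0; first by rewrite Xij0 Xji0.
  by rewrite Xij0 eqxx.
case: coherentX => diag_gt0 rowE.
have : Num.sg (X i i) = Num.sg (X i j) * Num.sg (X j i) by rewrite (rowE i j i Xij) sgr_smul.
rewrite gtr0_sg // => sg_prod.
by rewrite -[LHS]mul1r -(mulr_sg_sg Xij) -mulrA -sg_prod mulr1.
Qed.

Lemma coherent_support_equiv : equivalence_rel (fun i j => X i j != 0).
Proof.
move=> i j k; split; first exact: coherent_diag_neq0.
by move=> Xij; rewrite (coherent_support_row k Xij).
Qed.

Lemma coherent_balanced a b c : X a b != 0 -> X b c != 0 ->
  Num.sg (X a b) * Num.sg (X b c) * Num.sg (X c a) = 1.
Proof.
move=> Xab Xbc; case: coherentX => _ rowE.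
rewrite (coherent_sgC a c) -sgr_smul -(rowE a b c Xab).
by rewrite mulr_sg_sg // (coherent_support_row c Xab).
Qed.

End SignCoherent.

Definition support_classes (R : realFieldType) n (X : 'M[R]_n) : {set {set 'I_n}} :=
  equivalence_partition (fun i j => X i j != 0) [set: 'I_n].

Section SupportClasses.
Variables (R : realFieldType) (n : nat) (X : 'M[R]_n).
Hypothesis coherentX : sign_coherent X.
Local Notation V := (support_classes X).

Lemma support_classes_partition : partition V [set: 'I_n].
Proof. by apply: equivalence_partitionP => i j k _ _ _; apply: coherent_support_equiv. Qed.

Lemma mem_support_pblock i j : (j \in pblock V i) = (X i j != 0).
Proof.
by rewrite pblock_equivalence_partition ?inE // => a b c _ _ _; apply: coherent_support_equiv.
Qed.

Lemma support_pblock_mem i : pblock V i \in V.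
Proof. by rewrite pblock_mem // (cover_partition support_classes_partition). Qed.

Lemma mem_support_class A i j : A \in V -> i \in A -> (j \in A) = (X i j != 0).
Proof.
case/and3P: support_classes_partition => _ trivV _ AV iA.
by rewrite -(def_pblock trivV AV iA) mem_support_pblock.
Qed.

Lemma support_classes_balanced :
  exists V : {set {set 'I_n}},
    [/\ partition V [set: 'I_n],
        (forall A B, A \in V -> B \in V -> A != B ->
           forall i j, i \in A -> j \in B -> X i j = 0),
        (forall A, A \in V -> forall i j, i \in A -> j \in A -> X i j != 0) &
        (forall A, A \in V -> social_balance (principal_submx X A))].
Proof.
have in_class A i j : A \in V -> i \in A -> j \in A -> X i j != 0.
  by move=> AV iA; rewrite (mem_support_class j AV iA).
exists V; split=> [||A AV|A AV].
- exact: support_classes_partition.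
- move=> A B AV BV neqAB i j iA jB; apply/eqP; apply: contraNT neqAB => Xij.
  case/and3P: support_classes_partition => _ trivV _.
  have jA : j \in A by rewrite (mem_support_class j AV iA).
  by rewrite -(def_pblock trivV AV jA) (def_pblock trivV BV jB).
- by move=> i j; apply: in_class.
- split=> [i|i j k]; rewrite !mxE; first by case: coherentX.
  by apply: (coherent_balanced coherentX); apply: (in_class A _ _ AV); apply: enum_valP.
Qed.

End SupportClasses.

Definition row_abs_sum (R : realFieldType) n (X : 'M[R]_n) : 'rV[R]_n :=
  (absmx X *m const_mx 1 : 'cV[R]_n)^T.

Lemma row_abs_sumE (R : realFieldType) n (X : 'M[R]_n) i :
  row_abs_sum X 0 i = \sum_j `|X i j|.
Proof. by rewrite !mxE; apply: eq_bigr => j _; rewrite !mxE mulr1. Qed.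

Section FixedPoints.
Variables (R : realFieldType) (n : nat) (X : 'M[R]_n).

Lemma row_abs_sum_unitmx : (forall i, 0 < X i i) -> diag_mx (row_abs_sum X) \in unitmx.
Proof.
move=> diag_gt0; rewrite unitmxE det_diag unitfE; apply/prodf_neq0 => i _.
rewrite row_abs_sumE (bigD1 i) //= lt0r_neq0 // ltr_wpDr ?sumr_ge0 //.
by rewrite normr_gt0 lt0r_neq0.
Qed.

Lemma f_IbM_fixedP : (forall i, 0 < X i i) ->
  f_IbM X = X <-> forall i k, row_abs_sum X 0 i * X i k = \sum_j X i j * X j k.
Proof.
move=> /row_abs_sum_unitmx unitD.
have -> : f_IbM X = invmx (diag_mx (row_abs_sum X)) *m (X *m X) by rewrite /f_IbM mulmxA.
have entrywise : diag_mx (row_abs_sum X) *m X = X *m X <->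
                 forall i k, row_abs_sum X 0 i * X i k = \sum_j X i j * X j k.
  split=> [/matrixP eqDX i k | eqDX]; last apply/matrixP => i k.
    by have := eqDX i k; rewrite mul_diag_mx mxE [RHS]mxE.
  by rewrite mul_diag_mx mxE [RHS]mxE eqDX.
rewrite -entrywise; split=> [fixedX | <-]; last exact: mulKmx.
by rewrite -[Y in _ *m Y = _]fixedX mulKVmx.
Qed.

Lemma coherent_f_IbM_fixed : sign_coherent X -> f_IbM X = X.
Proof.
case=> diag_gt0 rowE; apply/f_IbM_fixedP => // i k.
rewrite row_abs_sumE mulr_suml; apply: eq_bigr => j _.
have [->|Xij] := eqVneq (X i j) 0; first by rewrite normr0 !mul0r.
by rewrite (rowE i j k Xij) mulrA [`|_| * _]mulrC -numEsg.
Qed.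

Lemma f_IbM_fixed_coherent : S_rs_symm X -> f_IbM X = X -> sign_coherent X.
Proof.
case=> _ diag_gt0 [g [g_gt0 symS]] /(f_IbM_fixedP diag_gt0) fixedX.
split=> // i j k Xij.
pose S := diag_mx g^T *m X.
have SE a b : S a b = g a 0 * X a b by rewrite /S mul_diag_mx !mxE.
have sgS a b : Num.sg (S a b) = Num.sg (X a b) by rewrite SE sgrM gtr0_sg ?mul1r.
rewrite -sgS; apply: (@signed_laplacian_form_eq0 _ _ S (fun a => X a k) (esym symS)); last first.
  by rewrite SE mulf_neq0 // (gt_eqF (g_gt0 i)).
apply: big1 => a _.
transitivity (g a 0 * X a k * (row_abs_sum X 0 a * X a k - \sum_b X a b * X b k)).
  rewrite row_abs_sumE mulr_suml mulrBr !mulr_sumr -sumrB.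
  by apply: eq_bigr => b _; rewrite !SE normrM gtr0_norm ?g_gt0 //; ring.
by rewrite fixedX subrr mulr0.
Qed.

End FixedPoints.

Lemma sign_coherent_reindex (R : realFieldType) m n (X : 'M[R]_m) (A : 'M[R]_n)
    (f : 'I_m -> 'I_n) :
  (forall i j, X i j = A (f i) (f j)) -> sign_coherent A -> sign_coherent X.
Proof. by move=> XE [diag_gt0 rowE]; split=> [i|i j k]; rewrite !XE //; apply: rowE. Qed.

Lemma perm_conj_mxE (R : realFieldType) n (s : 'S_n) (Y : 'M[R]_n) i j :
  (perm_mx s *m Y *m (perm_mx s)^T) i j = Y (s i) (s j).
Proof. by rewrite tr_perm_mx -col_permE -row_permE !mxE. Qed.

Lemma mxdiag_sg_rank1E (R : realFieldType) K (p : 'I_K -> nat)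
    (w : forall k, 'cV[R]_(p k)) (x y : sigT (fun k : 'I_K => 'I_(p k))) :
  (\mxdiag_(k < K) (sgmx (w k) *m (w k)^T)) (tagnat.rank x) (tagnat.rank y) =
  if tag x == tag y then Num.sg (w (tag x) (tagged x) 0) * w (tag y) (tagged y) 0 else 0.
Proof.
rewrite /mxdiag /mxblock mxE /tagnat.sig1 /tagnat.sig2 !tagnat.rankK.
case: x y => k a [l b] /=; case: eqP => [eq_kl | _]; last by rewrite mxE.
by subst l; rewrite conform_mx_id !mxE big_ord1 !mxE.
Qed.

Lemma sign_coherent_mxdiag_sg_rank1 (R : realFieldType) K (p : 'I_K -> nat)
    (w : forall k, 'cV[R]_(p k)) :
  (forall k a, 0 < `|w k a 0|) ->
  sign_coherent (\mxdiag_(k < K) (sgmx (w k) *m (w k)^T)).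
Proof.
move=> w_neq0; split=> [s | s t u].
  by rewrite -(tagnat.sigK s) mxdiag_sg_rank1E eqxx -normrEsg.
rewrite -(tagnat.sigK s) -(tagnat.sigK t) -(tagnat.sigK u) !mxdiag_sg_rank1E.
move: (tagnat.sig s) (tagnat.sig t) (tagnat.sig u) => [k a] [l b] [m c] /=.
have [eq_kl | _] := eqVneq k l; last by rewrite eqxx.
subst l; rewrite sgr_smul => _.
case: eqP => _; last by rewrite mulr0.
by rewrite mulrA -(mulrA (Num.sg _)) mulr_sg_sg ?mulr1 // -normr_gt0.
Qed.

Lemma Q_IbM_coherent (R : realFieldType) n (X : 'M[R]_n) : Q_IbM X -> sign_coherent X.
Proof.
case=> _ [P [K [p [E [w [/is_perm_mxP [s ->] _ w_neq0 ->]]]]]].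
apply: (sign_coherent_reindex (f := fun i => cast_ord (esym E) (s i))).
  by move=> i j; rewrite perm_conj_mxE castmxE.
exact: sign_coherent_mxdiag_sg_rank1.
Qed.

Section BlockDecomposition.
Variables (R : realFieldType) (n : nat) (X : 'M[R]_n).
Hypothesis coherentX : sign_coherent X.
Local Notation V := (support_classes X).
Local Notation K := #|V|.

Definition block (k : 'I_K) : {set 'I_n} := enum_val k.
Definition block_size (k : 'I_K) : nat := #|block k|.

Lemma block_size_sum : (\sum_(k < K) block_size k)%N = n.
Proof.
rewrite /block_size /block -(big_enum_val (fun A : {set 'I_n} => #|A|)) /=.
by rewrite -(card_partition (support_classes_partition coherentX)) cardsT card_ord.
Qed.

Lemma block_size_gt0 k : (0 < block_size k)%N.
Proof.
case/and3P: (support_classes_partition coherentX) => _ _ V_neq0.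
by rewrite card_gt0; apply: contraNneq V_neq0 => <-; apply: enum_valP.
Qed.

Definition block_of (i : 'I_n) : 'I_K :=
  enum_rank_in (support_pblock_mem coherentX i) (pblock V i).

Lemma block_ofK i : block (block_of i) = pblock V i.
Proof. by rewrite /block /block_of enum_rankK_in // support_pblock_mem. Qed.

Lemma mem_block_of i : i \in block (block_of i).
Proof. by rewrite block_ofK mem_support_pblock // coherent_diag_neq0. Qed.

Definition block_pos (i : 'I_n) : 'I_(block_size (block_of i)) :=
  enum_rank_in (mem_block_of i) i.

Lemma block_posK i : enum_val (block_pos i) = i.
Proof. by rewrite /block_pos enum_rankK_in // mem_block_of. Qed.

Definition sort_ord (i : 'I_n) : 'I_n :=
  cast_ord block_size_sum (tagnat.rank (Tagged (fun k => 'I_(block_size k)) (block_pos i))).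

Lemma sort_ord_inj : injective sort_ord.
Proof.
move=> i j /cast_ord_inj /tagnat.rank_inj eq_ij.
have := congr1 (fun x : {k : 'I_K & 'I_(block_size k)} => enum_val (tagged x)) eq_ij.
by rewrite /= !block_posK.
Qed.

Definition sort_perm : {perm 'I_n} := perm sort_ord_inj.

Definition block_rep (k : 'I_K) : 'I_n := enum_val (Ordinal (block_size_gt0 k)).

Definition block_vec (k : 'I_K) : 'cV[R]_(block_size k) :=
  \col_a X (block_rep k) (enum_val a).

Lemma block_vec_neq0 k a : 0 < `|block_vec k a 0|.
Proof.
by rewrite mxE normr_gt0 -(mem_support_class coherentX _ (enum_valP k)) ?enum_valP.
Qed.

Lemma block_decomposition :
  X = perm_mx sort_perm *m castmx (block_size_sum, block_size_sum)
        (\mxdiag_(k < K) (sgmx (block_vec k) *m (block_vec k)^T)) *m (perm_mx sort_perm)^T.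
Proof.
apply/matrixP => i j; rewrite perm_conj_mxE castmxE !permE /sort_ord /= !cast_ordK.
rewrite mxdiag_sg_rank1E /= !mxE !block_posK.
have rep_in_block l : X l (block_rep (block_of l)) != 0.
  by rewrite -mem_support_pblock // -block_ofK; apply: (enum_valP (Ordinal _)).
have [eq_ij | neq_ij] := eqVneq (block_of i) (block_of j).
  case: coherentX => _ rowE.
  by rewrite (rowE i _ j (rep_in_block i)) coherent_sgC // eq_ij.
apply/eqP; apply: contraNT neq_ij => Xij; apply/eqP/enum_val_inj.
change (block (block_of i) = block (block_of j)); rewrite !block_ofK.
case/and3P: (support_classes_partition coherentX) => _ trivV _.
by apply: same_pblock; rewrite // mem_support_pblock // coherent_support_sym.
Qed.

Lemma coherent_Q_IbM : S_rs_symm X -> Q_IbM X.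
Proof.
move=> domX; split=> //.
exists (perm_mx sort_perm), K, block_size, block_size_sum, block_vec; split.
- exact: perm_mx_is_perm.
- exact: block_size_gt0.
- exact: block_vec_neq0.
- exact: block_decomposition.
Qed.

End BlockDecomposition.

Theorem theorem4p4 (R : realFieldType) (n : nat) :
  (* (i) Q_IbM is exactly the set of fixed points of f_IbM in S^+_{rs-symm} *)
  (forall X : 'M[R]_n, Q_IbM X <-> (S_rs_symm X /\ f_IbM X = X)) /\
  (* (ii) isolated, complete, socially balanced subgraphs *)
  (forall X : 'M[R]_n, Q_IbM X ->
     exists V : {set {set 'I_n}},
       [/\ partition V [set: 'I_n],
           (forall A B, A \in V -> B \in V -> A != B ->
              forall i j, i \in A -> j \in B -> X i j = 0),
           (forall A, A \in V -> forall i j, i \in A -> j \in A -> X i j != 0) &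
           (forall A, A \in V -> social_balance (principal_submx X A))]).
Proof.
split=> X.
- split=> [QX | [domX fixedX]].
    by split; [case: QX | exact/coherent_f_IbM_fixed/Q_IbM_coherent].
  exact: coherent_Q_IbM (f_IbM_fixed_coherent domX fixedX) domX.
- by move/Q_IbM_coherent; apply: support_classes_balanced.
Qed.
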